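(* Let $V$ be a vertex operator algebra of CFT-type that satisfies the $C_2$-cofiniteness condition. Let $M$ be a subspace of $V$ with $C_2(V)\subseteq M$ and $\mathbf{1}\notin M$. Then $M$ is an $MZ_{0,-1}$-subspace of $V$ and $r_{0,-1}(M)=\bigoplus_{n=1}^{\infty}V_n$.
   Context: A vertex operator algebra is a $\mathbb{Z}$-graded vertex algebra $V=\bigoplus_{n\in\mathbb{Z}}V_n$ over $\mathbb{C}$ (with $Y(u,z)=\sum_n u_nz^{-n-1}$, $\mathbf{1}\in V_0$, and $u_mV_n\subseteq V_{k+n-m-1}$ for $u\in V_k$), with $\dim V_n<\infty$, $V_n=0$ for $n$ sufficiently negative, and a conformal vector $\omega\in V_2$ whose modes $L(n)$ satisfy the Virasoro relations, $L(0)|_{V_n}=n$, and $Y(L(-1)v,z)=\frac{d}{dz}Y(v,z)$. $V$ is of CFT-type if $V=\bigoplus_{n\ge0}V_n$ and $V_0=\mathbb{C}\mathbf{1}$. $C_2(V)=\operatorname{span}_{\mathbb{C}}\{u_{-2}v:u,v\in V\}$; $V$ satisfies the $C_2$-cofiniteness condition if $\dim V/C_2(V)<\infty$. Iterated products are nested to the right: $v_{n_1}\cdots v_{n_t}v=v_{n_1}(\cdots(v_{n_t}v))$. For a subspace $M\subseteq V$: $r_{0,-1}(M)$ is the set of $v\in V$ for which there is $m\ge 0$ with $v_{n_1}\cdots v_{n_t}v\in M$ for all $t\ge m$ and all $n_1,\dots,n_t\in\{0,-1\}$. $lsr_{0,-1}(M)$ is the set of $v\in V$ such that for every $b\in V$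 there is $m\ge0$ with $b_sv_{n_1}\cdots v_{n_t}v\in M$ for all $t\ge m$ and all $s,n_1,\dots,n_t\in\{0,-1\}$. $rsr_{0,-1}(M)$ is the set of $v\in V$ such that for every $w\in V$ there is $m\ge 0$ with $(v_{n_1}\cdots v_{n_t}v)_nw\in M$ for all $t\ge m$ and all $n,n_1,\dots,n_t\in\{0,-1\}$. $sr_{0,-1}(M)=lsr_{0,-1}(M)\cap rsr_{0,-1}(M)$. $M$ is an $MZ_{0,-1}$-subspace of $V$ if $r_{0,-1}(M)=sr_{0,-1}(M)$. *)

(* The ground field C is the complex numbers R[i] for an
   arbitrary R : realType (a realType is, up to isomorphism, the field of
   real numbers, so R[i] is C). *)
From mathcomp Require Import all_boot all_algebra complex.
From mathcomp Require Import reals.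
Set Implicit Arguments.
Unset Strict Implicit.
Unset Printing Implicit Defensive.
Import GRing.Theory.
Local Open Scope ring_scope.

Section VOA.
Variable R : realType.
Local Notation C := (R[i]).
Variable V : lmodType C.

(* Y u n v  stands for the mode  u_n v  (Y(u,z) = sum_n u_n z^{-n-1}). *)
Variable Y : V -> int -> V -> V.
(* pi n is the projection of V = (+)_n V_n onto V_n. *)
Variable pi : int -> V -> V.

Definition homog (n : int) (v : V) : Prop := pi n v = v.

Definition gbinom (p : int) (i : nat) : C :=
  (\prod_(j < i) ((p - (j : nat)%:Z)%:~R : C)) / (i`!)%:R.

Definition in_span (s : seq V) (v : V) : Prop :=
  exists cs : seq C, v = \sum_(i < size s) cs`_i *: s`_i.

Record is_VOA (one omega : V) : Prop := {
  pi_linear : forall n (a : C) (u v : V), pi n (a *: u + v) = a *: pi n u + pi n v;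
  pi_orth : forall m n v, pi m (pi n v) = if m == n then pi n v else 0;
  pi_sum : forall v, exists s : seq int,
      uniq s /\ v = \sum_(n <- s) pi n v /\ (forall n, n \notin s -> pi n v = 0);
  dim_finite : forall n, exists s : seq V,
      (forall x, x \in s -> homog n x) /\ forall v, homog n v -> in_span s v;
  bounded_below : exists N : int, forall n v, n < N -> pi n v = 0;
  Y_linear_r : forall u n (a : C) (v w : V), Y u n (a *: v + w) = a *: Y u n v + Y u n w;
  Y_linear_l : forall n v (a : C) (u u' : V), Y (a *: u + u') n v = a *: Y u n v + Y u' n v;
  truncation : forall u v, exists N : int, forall n, N <= n -> Y u n v = 0;
  vacuum_id : forall n v, Y one n v = if n == -1 then v else 0;
  creation_m1 : forall u, Y u (-1) one = u;
  creation_pos : forall u n, 0 <= n -> Y u n one = 0;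
  borcherds : forall u v w (p q r : int), exists N : nat, forall M : nat, (N <= M)%N ->
      \sum_(i < M) gbinom p i *: Y (Y u (r + i%:Z) v) (p + q - i%:Z) w =
      \sum_(i < M) ((-1) ^+ i * gbinom r i) *:
          (Y u (p + r - i%:Z) (Y v (q + i%:Z) w)
           - (-1 : C) ^ r *: Y v (q + r - i%:Z) (Y u (p + i%:Z) w));
  vacuum_deg : homog 0 one;
  mode_deg : forall k n m u v, homog k u -> homog n v ->
      homog (k + n - m - 1) (Y u m v);
  (* conformal vector, L(n) = omega_{n+1} *)
  omega_deg : homog 2 omega;
  virasoro : exists c : C, forall (m n : int) (w : V),
      Y omega (m + 1) (Y omega (n + 1) w) - Y omega (n + 1) (Y omega (m + 1) w) =
      (m - n)%:~R *: Y omega (m + n + 1) w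
      + (if m + n == 0 then ((m ^+ 3 - m)%:~R / 12%:R) * c else 0) *: w;
  L0_grading : forall n v, homog n v -> Y omega 1 v = n%:~R *: v;
  L_m1_derivative : forall v n w, Y (Y omega 0 v) n w = - (n%:~R) *: Y v (n - 1) w
}.

Definition CFT_type (one : V) : Prop :=
  (forall n v, n < 0 -> pi n v = 0) /\
  (forall v, homog 0 v -> exists a : C, v = a *: one).

Definition C2 (x : V) : Prop :=
  exists l : seq (C * V * V), x = \sum_(t <- l) t.1.1 *: Y t.1.2 (-2) t.2.

Definition C2_cofinite : Prop :=
  exists s : seq V, forall v, exists cs : seq C,
    C2 (v - \sum_(i < size s) cs`_i *: s`_i).

Definition subspace (M : V -> Prop) : Prop :=
  M 0 /\ forall (a : C) u v, M u -> M v -> M (a *: u + v).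

(* iterated product  v_{n_1} ... v_{n_t} v  (nested to the right) *)
Definition iter_prod (v : V) (ns : seq int) : V := foldr (fun n x => Y v n x) v ns.

Definition idx01 (ns : seq int) : bool := all (fun n => (n == 0) || (n == -1)) ns.
Definition in01 (n : int) : bool := (n == 0) || (n == -1).

Definition r01 (M : V -> Prop) (v : V) : Prop :=
  exists m : nat, forall ns : seq int, (m <= size ns)%N -> idx01 ns -> M (iter_prod v ns).

Definition lsr01 (M : V -> Prop) (v : V) : Prop :=
  forall b : V, exists m : nat, forall (s : int) (ns : seq int),
    (m <= size ns)%N -> in01 s -> idx01 ns -> M (Y b s (iter_prod v ns)).

Definition rsr01 (M : V -> Prop) (v : V) : Prop :=
  forall w : V, exists m : nat, forall (n : int) (ns : seq int),
    (m <= size ns)%N -> in01 n -> idx01 ns -> M (Y (iter_prod v ns) n w).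

Definition sr01 (M : V -> Prop) (v : V) : Prop := lsr01 M v /\ rsr01 M v.

Definition MZ01_subspace (M : V -> Prop) : Prop := forall v, r01 M v <-> sr01 M v.

Definition in_positive_part (v : V) : Prop := forall n : int, n <= 0 -> pi n v = 0.

End VOA.

(* The core is the pair of closure properties of C_2(V): it is stable under
   u_s from the left and from the right for s <= 0, and it contains v_0 v by
   skew symmetry.  Since v_0 is a derivation of the (-1)-product, every
   iterated product containing a 0-mode then lies in C_2(V), while
   v_{-1}^t v has weight > t when v has positive weight, hence lies in C_2(V)
   for large t by C_2-cofiniteness.  Conversely, if the vacuum component a 1
   of v is nonzero, write v_{-1} = a + u_{-1} with u_{-1} raising the weight:
   u_{-1} is nilpotent modulo C_2(V), so a + u_{-1} is invertible modulo any
   subspace M containing C_2(V), and v_{-1}^t 1 in M for large t forces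
   1 in M. *)
From mathcomp Require Import all_boot all_order all_algebra complex.
From mathcomp Require Import reals.
From mathcomp Require Import zify.
Set Implicit Arguments.
Unset Strict Implicit.
Unset Printing Implicit Defensive.
Import GRing.Theory Num.Theory.
Local Open Scope ring_scope.

Section InvertibleModuloSubspace.
Variables (K : fieldType) (W : lmodType K) (M : W -> Prop).
Hypotheses (M0 : M 0) (M_lin : forall a u v, M u -> M v -> M (a *: u + v)).
Variables (L : W -> W) (J : nat).
Hypothesis L_lin : forall a u v, L (a *: u + v) = a *: L u + L v.
Hypothesis L_nilpotent_mod : forall j y, (J <= j)%N -> M (iter j L y).
Variables (a : K) (x : W) (m : nat).
Hypothesis a_neq0 : a != 0.
Hypothesis shift_iter_mem :
  forall s, (m <= s)%N -> M (iter s (fun y => L y + a *: y) x).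

Lemma mem_of_shift_iter_mem : M x.
Proof.
pose T y := L y + a *: y; pose stable y := forall j, M (iter j L y).
have MZ c y : M y -> M (c *: y) by move=> My; rewrite -[_ *: _]addr0; apply: M_lin.
have iterL j c u v : iter j L (c *: u + v) = c *: iter j L u + iter j L v.
  by elim: j => [//|j IH] /=; rewrite IH L_lin.
have iterLT j y : iter j L (T y) = iter j.+1 L y + a *: iter j L y.
  by rewrite /T addrC iterL -iterSr addrC.
have stable_iter s : (m <= s)%N -> stable (iter s T x).
  move=> ms j; elim: j s ms => [|j IH] s ms; first exact: shift_iter_mem.
  have -> : iter j.+1 L (iter s T x) =
      (- a) *: iter j L (iter s T x) + iter j L (iter s.+1 T x).
    by rewrite [iter s.+1 T x]iterS iterLT scaleNr addrC -addrA subrr addr0.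
  by apply: M_lin; apply: IH => //; apply: leqW.
(* Downward induction on j, from L^j y = a^-1 (L^j (T y) - L^(j+1) y). *)
have stable_of_T y : stable (T y) -> stable y.
  move=> sTy; suff mem_high k j : (J <= j + k)%N -> M (iter j L y).
    by move=> j; apply: (mem_high J); rewrite leq_addl.
  elim: k j => [|k IH] j; first by rewrite addn0; apply: L_nilpotent_mod.
  move=> hk; have -> : iter j L y = a^-1 *: iter j L (T y) + (- a^-1) *: iter j.+1 L y.
    by rewrite iterLT scalerDr scalerA mulVf // scale1r scaleNr addrAC subrr add0r.
  by apply: M_lin => //; apply: MZ; apply: IH; rewrite addSnnS.
suff /(_ 0%N) : stable x by [].
have : stable (iter m T x) by exact: stable_iter.
by elim: m {stable_iter} x => [//|k IH] y; rewrite iterSr => /IH /stable_of_T.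
Qed.

End InvertibleModuloSubspace.

Lemma in01_le0 n : in01 n -> n <= 0.
Proof. by case/orP=> /eqP ->. Qed.

Section VOA.
Variable R : realType.
Local Notation C := (R[i]).
Variables (V : lmodType C) (Y : V -> int -> V -> V) (pi : int -> V -> V).
Variables (one omega : V).
Hypothesis HV : is_VOA Y pi one omega.

Lemma YDr u n v w : Y u n (v + w) = Y u n v + Y u n w.
Proof. by have := Y_linear_r HV u n 1 v w; rewrite !scale1r. Qed.

Lemma Y0r u n : Y u n 0 = 0.
Proof. by apply: (addIr (Y u n 0)); rewrite add0r -YDr addr0. Qed.

Lemma YZr u n c v : Y u n (c *: v) = c *: Y u n v.
Proof. by have := Y_linear_r HV u n c v 0; rewrite !addr0 Y0r addr0. Qed.

Lemma YDl u u' n v : Y (u + u') n v = Y u n v + Y u' n v.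
Proof. by have := Y_linear_l HV n v 1 u u'; rewrite !scale1r. Qed.

Lemma Y0l n v : Y 0 n v = 0.
Proof. by apply: (addIr (Y 0 n v)); rewrite add0r -YDl addr0. Qed.

Lemma YZl u n c v : Y (c *: u) n v = c *: Y u n v.
Proof. by have := Y_linear_l HV n v c u 0; rewrite !addr0 Y0l addr0. Qed.

Lemma Y_sumr (I : Type) (s : seq I) (F : I -> V) u n :
  Y u n (\sum_(i <- s) F i) = \sum_(i <- s) Y u n (F i).
Proof. exact: (big_morph (Y u n) (YDr u n) (Y0r u n) s xpredT F). Qed.

Lemma Y_suml (I : Type) (s : seq I) (F : I -> V) n w :
  Y (\sum_(i <- s) F i) n w = \sum_(i <- s) Y (F i) n w.
Proof.
exact: (big_morph (fun u => Y u n w) (fun u u' => YDl u u' n w) (Y0l n w) s xpredT F).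
Qed.

Lemma piD n u v : pi n (u + v) = pi n u + pi n v.
Proof. by have := pi_linear HV n 1 u v; rewrite !scale1r. Qed.

Lemma pi0 n : pi n 0 = 0.
Proof. by apply: (addIr (pi n 0)); rewrite add0r -piD addr0. Qed.

Lemma piZ n c v : pi n (c *: v) = c *: pi n v.
Proof. by have := pi_linear HV n c v 0; rewrite !addr0 pi0 addr0. Qed.

Lemma piB n u v : pi n (u - v) = pi n u - pi n v.
Proof. by rewrite piD -scaleN1r piZ scaleN1r. Qed.

Lemma pi_sumr (I : Type) (s : seq I) (F : I -> V) n :
  pi n (\sum_(i <- s) F i) = \sum_(i <- s) pi n (F i).
Proof. exact: (big_morph (pi n) (piD n) (pi0 n) s xpredT F). Qed.

Lemma pi_homog n x : homog pi n (pi n x).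
Proof. by rewrite /homog (pi_orth HV) eqxx. Qed.

Lemma homog_pi n x m : homog pi n x -> pi m x = if m == n then x else 0.
Proof. by move=> <-; rewrite (pi_orth HV). Qed.

Lemma pi_decomp x : exists s : seq int,
  x = \sum_(n <- s) pi n x /\ forall n, n \notin s -> pi n x = 0.
Proof. by have [s [_ x_supp]] := pi_sum HV x; exists s. Qed.

Lemma C2_0 : C2 Y 0.
Proof. by exists [::]; rewrite big_nil. Qed.

Lemma C2_D x y : C2 Y x -> C2 Y y -> C2 Y (x + y).
Proof. by move=> [l1 ->] [l2 ->]; exists (l1 ++ l2); rewrite big_cat. Qed.

Lemma C2_Z c x : C2 Y x -> C2 Y (c *: x).
Proof.
move=> [l ->]; exists [seq ((c * t.1.1, t.1.2), t.2) | t <- l].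
by rewrite big_map scaler_sumr; apply: eq_bigr => t _; rewrite scalerA.
Qed.

Lemma C2_B x y : C2 Y x -> C2 Y y -> C2 Y (x - y).
Proof. by move=> Cx Cy; rewrite -scaleN1r; apply/C2_D/C2_Z. Qed.

Lemma C2_sum (I : Type) (s : seq I) (F : I -> V) :
  (forall i, C2 Y (F i)) -> C2 Y (\sum_(i <- s) F i).
Proof.
move=> CF; elim: s => [|i s IH]; first by rewrite big_nil; exact: C2_0.
by rewrite big_cons; apply: C2_D.
Qed.

Lemma C2_mode_m2 u v : C2 Y (Y u (-2) v).
Proof. by exists [:: (1, u, v)]; rewrite big_seq1 scale1r. Qed.

(* L(-1) = omega_0 turns u_{-k-2} into a multiple of (L(-1)u)_{-k-1}. *)
Lemma C2_mode_le_m2 (k : int) u v : k <= -2 -> C2 Y (Y u k v).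
Proof.
move=> k_le; have [n ->] : exists n : nat, k = - (n.+2)%:Z by exists (`|k| - 2)%N; lia.
elim: n u => [|n IH] u; first exact: C2_mode_m2.
have e : - (n.+3)%:Z = - (n.+2)%:Z - 1 by lia.
have -> : Y u (- (n.+3)%:Z) v = ((n.+2)%:R)^-1 *: Y (Y omega 0 u) (- (n.+2)%:Z) v.
  rewrite (L_m1_derivative HV) scalerA e -[LHS]scale1r; congr (_ *: _).
  by rewrite mulrNz opprK pmulrn mulVf // pnatr_eq0.
by apply/C2_Z/IH.
Qed.

Lemma gbinom0 p : gbinom R p 0 = 1.
Proof. by rewrite /gbinom big_ord0 divr1. Qed.

Lemma gbinom0S i : gbinom R 0 i.+1 = 0.
Proof. by rewrite /gbinom big_ord_recl subr0 !mul0r. Qed.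

Lemma sum_ord_recl0 N (F : 'I_N.+1 -> V) :
  (forall i : 'I_N, F (lift ord0 i) = 0) -> \sum_(i < N.+1) F i = F ord0.
Proof. by move=> F0; rewrite big_ord_recl big1 ?addr0. Qed.

Lemma commutator_formula u v w (p q : int) : exists N : nat,
  \sum_(i < N.+1) gbinom R p i *: Y (Y u i v) (p + q - i%:Z) w =
  Y u p (Y v q w) - Y v q (Y u p w).
Proof.
have [N HN] := borcherds HV u v w p q 0; exists N.
have := HN N.+1 (leqnSn N); rewrite [X in _ = X -> _]sum_ord_recl0 => [|i]; last first.
  by rewrite lift0 gbinom0S mulr0 scale0r.
rewrite expr0 gbinom0 mulr1 expr0z !scale1r !addr0 => <-.
by apply: eq_bigr => i _; rewrite add0r.
Qed.

Lemma iterate_formula u v w (q r : int) : exists N : nat,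
  Y (Y u r v) q w = \sum_(i < N.+1) ((-1) ^+ i * gbinom R r i) *:
    (Y u (r - i%:Z) (Y v (q + i%:Z) w) - (-1) ^ r *: Y v (q + r - i%:Z) (Y u i w)).
Proof.
have [N HN] := borcherds HV u v w 0 q r; exists N.
have := HN N.+1 (leqnSn N); rewrite sum_ord_recl0 => [|i]; last first.
  by rewrite lift0 gbinom0S scale0r.
rewrite gbinom0 scale1r !addr0 add0r => ->.
by apply: eq_bigr => i _; rewrite !add0r.
Qed.

Lemma C2_mode_nonposl_mode_m2 b (s : int) u v : s <= 0 -> C2 Y (Y b s (Y u (-2) v)).
Proof.
move=> s_le0; have [N E] := commutator_formula b u v s (-2).
rewrite -[Y b s _](subrK (Y u (-2) (Y b s v))) -E.
apply: C2_D; last exact: C2_mode_m2.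
by apply: C2_sum => i; apply/C2_Z/C2_mode_le_m2; lia.
Qed.

Lemma C2_mode_nonposl b (s : int) x : s <= 0 -> C2 Y x -> C2 Y (Y b s x).
Proof.
move=> s_le0 [l ->]; rewrite Y_sumr; apply: C2_sum => t.
by rewrite YZr; apply/C2_Z/C2_mode_nonposl_mode_m2.
Qed.

Lemma C2_mode_m2_mode_nonpos u v (n : int) w : n <= 0 -> C2 Y (Y (Y u (-2) v) n w).
Proof.
move=> n_le0; have [N ->] := iterate_formula u v w n (-2).
apply: C2_sum => i; apply/C2_Z/C2_B; first by apply: C2_mode_le_m2; lia.
by apply/C2_Z/C2_mode_le_m2; lia.
Qed.

Lemma C2_mode_nonposr x (n : int) w : n <= 0 -> C2 Y x -> C2 Y (Y x n w).
Proof.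
move=> n_le0 [l ->]; rewrite Y_suml; apply: C2_sum => t.
by rewrite YZl; apply/C2_Z/C2_mode_m2_mode_nonpos.
Qed.

(* Skew symmetry: the commutator formula for v_{-1} and v_0 on the vacuum
   reads v_0 v + (terms with modes <= -2) = - v_0 v. *)
Lemma C2_mode0_self v : C2 Y (Y v 0 v).
Proof.
have [N] := commutator_formula v v one (-1) 0.
rewrite big_ord_recl /= gbinom0 scale1r (creation_pos HV v (n:=0)) // Y0r.
rewrite add0r addr0 subr0 !(creation_m1 HV); set S := \sum_(i < N) _ => E.
have CS : C2 Y S.
  by apply: C2_sum => i; apply/C2_Z/C2_mode_le_m2; rewrite /bump /=; lia.
rewrite -[Y v 0 v]scale1r -(@mulVf _ 2%:R) ?pnatr_eq0 // -scalerA scaler_nat.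
have -> : Y v 0 v *+ 2 = - S by rewrite mulr2n -{2}[Y v 0 v]opprK -E opprD addNKr.
by apply: C2_Z; rewrite -sub0r; apply: C2_B C2_0 CS.
Qed.

Lemma mode0_derivation v u w :
  Y v 0 (Y u (-1) w) = Y (Y v 0 u) (-1) w + Y u (-1) (Y v 0 w).
Proof.
have [N] := commutator_formula v u w 0 (-1).
rewrite sum_ord_recl0 => [|i]; last by rewrite lift0 gbinom0S scale0r.
by rewrite gbinom0 scale1r add0r subr0 => ->; rewrite subrK.
Qed.

Lemma C2_pi n x : C2 Y x -> C2 Y (pi n x).
Proof.
move=> [t ->]; rewrite pi_sumr; apply: C2_sum => [[[c u] v]] /=.
have [su [-> _]] := pi_decomp u; have [sv [-> _]] := pi_decomp v.
rewrite piZ Y_suml pi_sumr; apply/C2_Z/C2_sum => k.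
rewrite Y_sumr pi_sumr; apply: C2_sum => l.
rewrite (homog_pi n (mode_deg HV (-2) (pi_homog k u) (pi_homog l v))).
by case: eqP => _; [exact: C2_mode_m2 | exact: C2_0].
Qed.

Definition wt_above (d : int) (x : V) := forall n, n <= d -> pi n x = 0.

Lemma wt_above_mode_m1 d u x :
  wt_above 0 u -> wt_above d x -> wt_above (d + 1) (Y u (-1) x).
Proof.
move=> wt_u wt_x n n_le.
have [su [-> _]] := pi_decomp u; have [sx [-> _]] := pi_decomp x.
rewrite Y_suml pi_sumr; apply: big1 => k _.
rewrite Y_sumr pi_sumr; apply: big1 => l _.
rewrite (homog_pi n (mode_deg HV (-1) (pi_homog k u) (pi_homog l x))).
case: eqP => // n_eq.
have [k_le|k_gt] := lerP k 0; first by rewrite wt_u // Y0l.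
have [l_le|l_gt] := lerP l d; first by rewrite wt_x // Y0r.
lia.
Qed.

Lemma wt_above_iter_mode_m1 d u y j : wt_above 0 u -> wt_above d y ->
  wt_above (d + j%:Z) (iter j (Y u (-1)) y).
Proof.
move=> wt_u wt_y; elim: j => [|j IH]; first by rewrite addr0.
have -> : d + j.+1%:Z = d + j%:Z + 1 by lia.
exact: wt_above_mode_m1.
Qed.

Hypothesis Hcft : CFT_type pi one.

Lemma wt_above_m1 x : wt_above (-1) x.
Proof. by move=> n n_le; apply: Hcft.1; lia. Qed.

Lemma int_seq_ub (s : seq int) : exists N : int, forall n, N <= n -> n \notin s.
Proof.
elim: s => [|k s [N N_ub]]; first by exists 0.
exists (Order.max N (k + 1)) => n n_ge; rewrite in_cons negb_or N_ub ?andbT; last by lia.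
by apply/eqP; lia.
Qed.

Lemma pi_high_eq0 (s : seq V) :
  exists N : int, forall y n, y \in s -> N <= n -> pi n y = 0.
Proof.
elim: s => [|y s [N N_ub]]; first by exists 0.
have [sy [_ sy_supp]] := pi_decomp y; have [Ny Ny_ub] := int_seq_ub sy.
exists (Order.max N Ny) => z n; rewrite in_cons => /orP [/eqP -> | z_s] n_ge.
  by apply/sy_supp/Ny_ub; lia.
by apply: N_ub => //; lia.
Qed.

Hypothesis HC2 : C2_cofinite Y.

(* Project onto V_n a decomposition of x modulo C_2(V) along a finite family
   that has no components of weight >= n. *)
Lemma C2_homog_high : exists N : int, forall n x, N <= n -> homog pi n x -> C2 Y x.
Proof.
have [s s_span] := HC2; have [N N_ub] := pi_high_eq0 s.
exists N => n x n_ge x_n; have [cs C2_rest] := s_span x.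
rewrite -x_n -[x](subrK (\sum_(i < size s) cs`_i *: s`_i)) piD pi_sumr.
rewrite [X in _ + X]big1 ?addr0 => [|i _]; first exact: C2_pi.
by rewrite piZ N_ub ?scaler0 ?mem_nth.
Qed.

Lemma C2_wt_above : exists D : int, forall d x, D <= d -> wt_above d x -> C2 Y x.
Proof.
have [N N_C2] := C2_homog_high; exists N => d x d_ge wt_x.
have [s [-> _]] := pi_decomp x; apply: C2_sum => n.
have [n_le|n_gt] := lerP n d; first by rewrite wt_x //; exact: C2_0.
by apply: (N_C2 n); [lia | exact: pi_homog].
Qed.

Lemma C2_iter_mode_m1 u : wt_above 0 u ->
  exists J : nat, forall j y, (J <= j)%N -> C2 Y (iter j (Y u (-1)) y).
Proof.
move=> wt_u; have [D D_C2] := C2_wt_above; exists `|D|.+1 => j y j_ge.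
apply: (D_C2 (-1 + j%:Z)); first by lia.
exact: wt_above_iter_mode_m1 (wt_above_m1 y).
Qed.

Lemma iter_prod_nseq_m1 v t : iter_prod Y v (nseq t (-1)) = iter t (Y v (-1)) v.
Proof. by elim: t => //= t ->. Qed.

Lemma C2_mode0_iter_m1 v t : C2 Y (Y v 0 (iter t (Y v (-1)) v)).
Proof.
elim: t => [|t IH] /=; first exact: C2_mode0_self.
rewrite mode0_derivation; apply: C2_D; last exact: C2_mode_nonposl.
exact: C2_mode_nonposr (C2_mode0_self v).
Qed.

Lemma iter_prod01_cases v ns : idx01 ns ->
  C2 Y (iter_prod Y v ns) \/ iter_prod Y v ns = iter (size ns) (Y v (-1)) v.
Proof.
elim: ns => [_|n ns IH]; first by right.
have -> : iter_prod Y v (n :: ns) = Y v n (iter_prod Y v ns) by [].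
move=> /andP [n01 /IH [C2_ns | ->]].
  by left; apply: C2_mode_nonposl C2_ns; exact: in01_le0.
by case/orP: n01 => /eqP ->; [left; exact: C2_mode0_iter_m1 | right].
Qed.

Lemma C2_iter_prod01 v : in_positive_part pi v ->
  exists m : nat, forall ns, (m <= size ns)%N -> idx01 ns -> C2 Y (iter_prod Y v ns).
Proof.
move=> v_pos; have [J J_C2] := C2_iter_mode_m1 v_pos.
exists J => ns ns_ge /(iter_prod01_cases v) [//|->].
exact: J_C2.
Qed.

Lemma positive_of_r01 (M : V -> Prop) v : subspace M -> (forall x, C2 Y x -> M x) ->
  ~ M one -> r01 Y M v -> in_positive_part pi v.
Proof.
move=> [M0 M_lin] C2_M not_M1 [m r01_m] n n_le0.
have [n_lt0|->] : n < 0 \/ n = 0 by lia.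
  exact: Hcft.1.
have [a v0] := Hcft.2 _ (pi_homog 0 v).
rewrite v0; have [->|a_neq0] := eqVneq a 0; first by rewrite scale0r.
case: not_M1; pose u := v - a *: one.
have wt_u : wt_above 0 u.
  move=> k k_le0; have [k_lt0|->] : k < 0 \/ k = 0 by lia.
    by rewrite piB !Hcft.1 // subr0.
  by rewrite piB piZ v0 (vacuum_deg HV) subrr.
have Yv_m1 y : Y u (-1) y + a *: y = Y v (-1) y.
  by rewrite /u YDl -scaleNr YZl (vacuum_id HV) eqxx scaleNr addrNK.
have [J J_C2] := C2_iter_mode_m1 wt_u.
apply: (mem_of_shift_iter_mem M0 M_lin (Y_linear_r HV u (-1)) _ a_neq0 (m := m.+1)).
  by move=> j y /J_C2 /C2_M.
case=> // s s_ge; rewrite (eq_iter Yv_m1) iterSr (creation_m1 HV) -iter_prod_nseq_m1.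
by apply: r01_m; rewrite ?size_nseq // /idx01 all_nseq eqxx !orbT.
Qed.

End VOA.

Theorem mainTheorem13 (R : realType) (V : lmodType R[i])
    (Y : V -> int -> V -> V) (pi : int -> V -> V) (one omega : V)
    (HV : is_VOA Y pi one omega)
    (Hcft : CFT_type pi one)
    (HC2 : C2_cofinite Y)
    (M : V -> Prop) (HM : subspace M)
    (HC2M : forall x, C2 Y x -> M x)
    (H1 : ~ M one) :
  MZ01_subspace Y M /\ (forall v, r01 Y M v <-> in_positive_part pi v).
Proof.
have C2_r01 v := C2_iter_prod01 HV Hcft HC2 (v := v).
have r01_iff v : r01 Y M v <-> in_positive_part pi v.
  split; first exact: (positive_of_r01 HV Hcft HC2 HM HC2M H1 (v := v)).
  by move=> /C2_r01 [m C2_m]; exists m => ns ns_ge ns01; apply/HC2M/C2_m.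
split=> // v; split.
  move=> /r01_iff /C2_r01 [m C2_m]; split=> [b | w].
    exists m => s ns ns_ge /in01_le0 s_le0 ns01.
    exact/HC2M/(C2_mode_nonposl HV _ s_le0)/C2_m.
  exists m => n ns ns_ge /in01_le0 n_le0 ns01.
  exact/HC2M/(C2_mode_nonposr HV _ n_le0)/C2_m.
move=> [lsr _]; have [m M_m] := lsr one; exists m => ns ns_ge ns01.
by have := M_m (-1) ns ns_ge isT ns01; rewrite (vacuum_id HV) eqxx.
Qed.
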